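(* Let $G=(V,E)$ be a graph on $n$ vertices, $w$ a legal weight assignment for $G$, $0<\beta<1$, and $(z_v)_{v\in V}$ complex activities with $|z_v|\ge1$ for all $v$, such that $Z_w(G)\neq0$. Then $\Re\left(\frac{\mathcal{D}_GZ_w(G)}{Z_w(G)}\right)\ge \frac n2$.
   Context: A weight assignment $w:V\to\mathbb{Z}_{>0}$ is legal if $w(v)\ge\deg(v)$ for every $v$. $Z_w(G)=\sum_{\sigma\in\{+,-\}^V}\beta^{d(\sigma)}\prod_{v:\sigma(v)=+}z_v^{w(v)}$, where $d(\sigma)$ is the number of edges $\{u,v\}$ with $\sigma(u)\ne\sigma(v)$, and $\mathcal{D}_G=\sum_{v\in V}z_v\frac{\partial}{\partial z_v}$. *)

(* Complex numbers are represented by an arbitrary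
   numeric closed field C (e.g. algC, or the complex numbers). *)
From HB Require Import structures.
From mathcomp Require Import all_boot all_order all_algebra.
Set Implicit Arguments. Unset Strict Implicit. Unset Printing Implicit Defensive.
Import Order.TTheory GRing.Theory Num.Theory.
Local Open Scope ring_scope.

Definition simple_graph (T : finType) (e : rel T) : Prop :=
  symmetric e /\ irreflexive e.

Definition deg (T : finType) (e : rel T) (v : T) : nat := #|[set u | e v u]|.

Definition edges (T : finType) (e : rel T) : {set {set T}} :=
  [set [set x.1; x.2] | x in [set x : T * T | e x.1 x.2]].

Definition legal (T : finType) (e : rel T) (w : T -> nat) : Prop :=
  forall v, (0 < w v)%N /\ (deg e v <= w v)%N.

(* spin configurations sigma : T -> bool, true = '+', false = '-' *)
Definition dcut (T : finType) (e : rel T) (s : {ffun T -> bool}) : nat :=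
  #|[set E0 in edges e | [exists u in E0, exists v in E0, s u != s v]]|.

Definition Zw (C : numClosedFieldType) (T : finType) (e : rel T) (w : T -> nat)
    (beta : C) (z : T -> C) : C :=
  \sum_(s : {ffun T -> bool}) beta ^+ dcut e s * \prod_(v | s v) z v ^+ w v.

(* D_G Z_w(G), where D_G = sum_v z_v d/dz_v.  Applied to the monomial
   prod_{v in S} z_v^{w v} this operator multiplies it by sum_{v in S} w v. *)
Definition DZw (C : numClosedFieldType) (T : finType) (e : rel T) (w : T -> nat)
    (beta : C) (z : T -> C) : C :=
  \sum_(s : {ffun T -> bool})
     beta ^+ dcut e s * ((\sum_(v | s v) w v)%N%:R * \prod_(v | s v) z v ^+ w v).

From HB Require Import structures.
From mathcomp Require Import all_boot all_order all_algebra.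
From mathcomp Require Import ring.
Import Order.TTheory GRing.Theory Num.Theory.
Set Implicit Arguments. Unset Strict Implicit.
Local Open Scope ring_scope.

(* The Ising weights c_S = beta^{d(S)} form a Lee–Yang family: the
   multi-affine polynomial sum_S c_S prod_{v in S} x_v has no zero in the open
   unit polydisk.  This is Asano's proof of the Lee–Yang circle theorem: start
   from prod_v (1 + x_v) and add one edge at a time, each step being a
   multiplication by the edge polynomial followed by two Asano contractions.
   As c is invariant under complementation, there is no zero with all
   |x_v| > 1 either.  Restricting Z_w to the ray z_v := t z_v gives a
   polynomial p(t) of degree >= n whose roots all lie in the closed unit
   disk (p(t) = P((t z_v)^{w_v}) and |t z_v|^{w_v} > 1 for |t| > 1); moreover
   D_G Z_w / Z_w = p'(1)/p(1) = sum over roots a of 1/(1 - a), and each term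
   has real part >= 1/2. *)

Section DiskGeometry.
Variable C : numClosedFieldType.

Lemma Re_inv_one_sub_ge (a : C) :
  `|a| <= 1 -> a != 1 -> 1 / 2 <= 'Re ((1 - a)^-1).
Proof.
move=> a_le1 a_neq1; set b := 1 - a.
have b_neq0 : b != 0 by rewrite subr_eq0 eq_sym.
have b_norm_gt0 : 0 < `|b| ^+ 2 by rewrite exprn_gt0 // normr_gt0.
have a_sq : `|1 - b| ^+ 2 <= 1 by rewrite /b opprB addrC subrK expr_le1.
have a_sqE : `|1 - b| ^+ 2 = 1 - 2 * 'Re b + `|b| ^+ 2.
  by rewrite !normCK ReE rmorphB /= rmorph1; field.
have b_sq_le : `|b| ^+ 2 <= 2 * 'Re b.
  rewrite -subr_ge0; move: a_sq; rewrite a_sqE -subr_ge0.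
  by congr (0 <= _); ring.
rewrite ReV ler_pdivlMr // mul1r mulrC ler_pdivrMr ?ltr0n //.
by rewrite mulrC.
Qed.

Lemma Re_logderiv_prod_ge (r : seq C) :
  (forall a, a \in r -> `|a| <= 1 /\ a != 1) ->
  (size r)%:R / 2 <= 'Re ((\prod_(a <- r) ('X - a%:P))^`().[1]
                           / (\prod_(a <- r) ('X - a%:P)).[1]).
Proof.
elim: r => [|a r IH] roots_r.
  by rewrite big_nil derivC horner0 !mul0r ReE rmorph0 addr0 mul0r.
have [a_le1 a_neq1] := roots_r a (mem_head _ _).
have roots_r' b : b \in r -> `|b| <= 1 /\ b != 1.
  by move=> br; apply: roots_r; rewrite in_cons br orbT.
set Q := \prod_(b <- r) ('X - b%:P).
have Q1_neq0 : Q.[1] != 0.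
  rewrite horner_prod prodf_seq_neq0; apply/allP => b /roots_r' [_ b_neq1].
  by rewrite hornerXsubC subr_eq0 eq_sym.
have a1_neq0 : 1 - a != 0 by rewrite subr_eq0 eq_sym.
rewrite big_cons derivM derivXsubC mul1r !hornerE -/Q.
have -> : (Q.[1] + (1 - a) * Q^`().[1]) / ((1 - a) * Q.[1])
   = (1 - a)^-1 + Q^`().[1] / Q.[1] by field; rewrite a1_neq0 Q1_neq0.
rewrite raddfD /= -add1n natrD mulrDl.
by apply: lerD; [exact: Re_inv_one_sub_ge | exact: IH].
Qed.

(* The same estimate for any polynomial with no root outside the closed unit
   disk and no root at 1, obtained by splitting p over the closed field C. *)
Lemma Re_logderiv_ge (p : {poly C}) :
  p.[1] != 0 -> (forall t, 1 < `|t| -> p.[t] != 0) ->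
  (size p).-1%:R / 2 <= 'Re (p^`().[1] / p.[1]).
Proof.
move=> p1_neq0 p_out.
have [r Ep] := closed_field_poly_normal p.
have p_neq0 : p != 0 by apply: contraNneq p1_neq0 => ->; rewrite horner0.
have lc_neq0 : lead_coef p != 0 by rewrite lead_coef_eq0.
have size_p : size p = (size r).+1 by rewrite Ep size_scale // size_prod_XsubC.
have roots_r a : a \in r -> `|a| <= 1 /\ a != 1.
  move=> ar; have pa0 : p.[a] = 0.
    by rewrite Ep hornerZ; move: (root_prod_XsubC r a); rewrite ar => /rootP ->; rewrite mulr0.
  split; last by apply: contra_neq p1_neq0 => a1; rewrite -a1 pa0.
  rewrite real_leNgt ?normr_real ?real1 //; apply/negP => a_gt1.
  by move: (p_out a a_gt1); rewrite pa0 eqxx.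
have Q1_neq0 : (\prod_(a <- r) ('X - a%:P)).[1] != 0.
  by apply: contraNneq p1_neq0; rewrite Ep hornerZ => ->; rewrite mulr0.
rewrite size_p Ep derivZ !hornerZ -mulf_div divff // mul1r.
exact: Re_logderiv_prod_ge.
Qed.
End DiskGeometry.

Section AsanoContraction.
Variable C : numClosedFieldType.

Lemma quadratic_roots (A b D : C) : D != 0 ->
  exists r1 r2, [/\ A + b * r1 + D * r1 ^+ 2 = 0, A + b * r2 + D * r2 ^+ 2 = 0
     & r1 * r2 = A / D].
Proof.
move=> D_neq0; set d := sqrtC (b ^+ 2 - 4%:R * D * A).
have dE : d ^+ 2 = b ^+ 2 - 4%:R * D * A by rewrite sqrtCK.
have two_neq0 : (2%:R : C) != 0 by rewrite pnatr_eq0.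
have root_of (d' : C) : d' ^+ 2 = d ^+ 2 ->
    A + b * ((- b + d') / (2%:R * D)) + D * ((- b + d') / (2%:R * D)) ^+ 2 = 0.
  move=> d'E.
  have -> : A + b * ((- b + d') / (2%:R * D)) + D * ((- b + d') / (2%:R * D)) ^+ 2
     = (d' ^+ 2 - (b ^+ 2 - 4%:R * D * A)) / (4%:R * D).
    by field; rewrite ?D_neq0 ?two_neq0 ?pnatr_eq0.
  by rewrite d'E dE subrr mul0r.
exists ((- b + d) / (2%:R * D)), ((- b + - d) / (2%:R * D)); split.
- exact: root_of.
- by apply: root_of; rewrite sqrrN.
- have -> : (- b + d) / (2%:R * D) * ((- b + - d) / (2%:R * D))
     = (b ^+ 2 - d ^+ 2) / (4%:R * D ^+ 2).
    by field; rewrite ?D_neq0 ?two_neq0 ?pnatr_eq0.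
  by rewrite dE; field; rewrite ?D_neq0 ?two_neq0 ?pnatr_eq0.
Qed.

(* Otherwise A/D = -t would be a product of two roots of A + (B+C')r + Dr^2,
   one of which then lies in the open disk. *)
Lemma asano_contraction (A B C' D : C) :
  (forall x y, `|x| < 1 -> `|y| < 1 -> A + B * x + C' * y + D * x * y != 0) ->
  forall t, `|t| < 1 -> A + D * t != 0.
Proof.
move=> free t t_lt1; apply/negP => /eqP contr.
have A_neq0 : A != 0.
  by have := free 0 0; rewrite normr0 ltr01 !mulr0 !addr0; apply.
have D_neq0 : D != 0.
  by apply: contra_neq A_neq0 => D0; move: contr; rewrite D0 mul0r addr0.
have [r1 [r2 [r1_root r2_root r12]]] := quadratic_roots A (B + C') D_neq0.
have r12_lt1 : `|r1| * `|r2| < 1.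
  have AD : A / D = - t by rewrite -(subr0 A) -contr; field.
  by rewrite -normrM r12 AD normrN.
have root_ge1 r : A + (B + C') * r + D * r ^+ 2 = 0 -> 1 <= `|r|.
  move=> r_root; rewrite real_leNgt ?normr_real ?real1 //; apply/negP => r_lt1.
  have := free r r r_lt1 r_lt1.
  have -> : A + B * r + C' * r + D * r * r = A + (B + C') * r + D * r ^+ 2 by ring.
  by rewrite r_root eqxx.
have : 1 <= `|r1| * `|r2|.
  by rewrite -[1]mulr1 ler_pM ?root_ge1.
by rewrite real_leNgt ?r12_lt1 ?real1 ?realM ?normr_real.
Qed.
End AsanoContraction.

Section EdgeContraction.
Variables (C : numClosedFieldType) (beta : C).
Hypotheses (beta_real : beta \is Num.real) (beta_lt1 : `|beta| < 1).

(* The Lee–Yang polynomial of a single edge with real interaction beta,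
   |beta| < 1, has no zero in the open unit bidisk: if it vanished then
   |1 + beta y1| = |beta + y1| |y2| <= |beta + y1|, whereas
   |1 + beta y1|^2 - |beta + y1|^2 = (1 - beta^2)(1 - |y1|^2) > 0. *)
Lemma edge_poly_neq0 (y1 y2 : C) : `|y1| < 1 -> `|y2| < 1 ->
  1 + beta * y1 + beta * y2 + y1 * y2 != 0.
Proof.
move=> y1_lt1 y2_lt1; apply/negP => /eqP root.
set u := 1 + beta * y1; set v := beta + y1.
have uE : u = - (v * y2).
  by apply/eqP; rewrite -subr_eq0 opprK -root /u /v; apply/eqP; ring.
have u_le_v : `|u| ^+ 2 <= `|v| ^+ 2.
  rewrite lerXn2r ?nnegrE ?normr_ge0 // uE normrN normrM.
  by rewrite -[X in _ <= X]mulr1 ler_pM ?normr_ge0 // ltW.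
have diffE : `|u| ^+ 2 - `|v| ^+ 2 = (1 - `|beta| ^+ 2) * (1 - `|y1| ^+ 2).
  by rewrite !normCK /u /v !rmorphD /= rmorph1 rmorphM /= conj_Creal //; ring.
have : 0 < `|u| ^+ 2 - `|v| ^+ 2.
  by rewrite diffE mulr_gt0 // subr_gt0 expr_lt1 ?normr_ge0.
by rewrite subr_gt0 real_ltNge ?u_le_v ?realX ?normr_real.
Qed.

(* Multiplying a nonvanishing bi-affine polynomial by the edge polynomial
   and Asano-contracting twice shows that damping the two "mixed" coefficients
   B, C' by beta preserves nonvanishing on the open unit bidisk. *)
Lemma edge_contraction (A B C' D : C) :
  (forall p q, `|p| < 1 -> `|q| < 1 -> A + B * p + C' * q + D * p * q != 0) ->
  forall s t, `|s| < 1 -> `|t| < 1 ->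
    A + beta * B * s + beta * C' * t + D * s * t != 0.
Proof.
move=> free s t s_lt1 t_lt1.
have first_contraction x2 y2 : `|x2| < 1 -> `|y2| < 1 ->
    (A + C' * x2) * (1 + beta * y2) + (B + D * x2) * (beta + y2) * s != 0.
  move=> x2_lt1 y2_lt1.
  apply: (@asano_contraction _ ((A + C' * x2) * (1 + beta * y2))
     ((B + D * x2) * (1 + beta * y2)) ((A + C' * x2) * (beta + y2))) => // x1 y1 x1_lt1 y1_lt1.
  have -> : (A + C' * x2) * (1 + beta * y2) + (B + D * x2) * (1 + beta * y2) * x1 +
     (A + C' * x2) * (beta + y2) * y1 + (B + D * x2) * (beta + y2) * x1 * y1
     = (A + B * x1 + C' * x2 + D * x1 * x2) * (1 + beta * y1 + beta * y2 + y1 * y2)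
    by ring.
  by rewrite mulf_neq0 ?free ?edge_poly_neq0.
have -> : A + beta * B * s + beta * C' * t + D * s * t
   = A + s * beta * B + (C' * beta + s * D) * t by ring.
apply: (@asano_contraction _ _ (C' + s * beta * D) (A * beta + s * B)) => // x2 y2 x2_lt1 y2_lt1.
have -> : A + s * beta * B + (C' + s * beta * D) * x2 + (A * beta + s * B) * y2 +
    (C' * beta + s * D) * x2 * y2 =
    (A + C' * x2) * (1 + beta * y2) + (B + D * x2) * (beta + y2) * s by ring.
exact: first_contraction.
Qed.
End EdgeContraction.

Section LeeYang.
Variables (C : numClosedFieldType) (T : finType).

(* The multi-affine polynomial sum_S c_S prod_{v in S} x_v, subsets S of T
   being encoded by their indicator functions. *)
Definition multiaffine (c : {ffun T -> bool} -> C) (x : T -> C) : C :=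
  \sum_(s : {ffun T -> bool}) c s * \prod_(v | s v) x v.

Definition polydisk_free (c : {ffun T -> bool} -> C) : Prop :=
  forall x : T -> C, (forall v, `|x v| < 1) -> multiaffine c x != 0.

Lemma polydisk_free_eq (c c' : {ffun T -> bool} -> C) :
  c =1 c' -> polydisk_free c -> polydisk_free c'.
Proof.
move=> cc' free x x_lt1; have := free x x_lt1; rewrite /multiaffine.
by under eq_bigr => s _ do rewrite cc'.
Qed.

(* The empty graph: the polynomial factors as prod_v (1 + x_v). *)
Lemma polydisk_free_one : polydisk_free (fun _ => 1).
Proof.
move=> x x_lt1.
have -> : multiaffine (fun _ => 1) x = \prod_v (1 + x v).
  rewrite /multiaffine (eq_bigr (fun v => \sum_(b : bool) (if b then x v else 1))); last first.
    by move=> v _; rewrite big_bool /= addrC.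
  by rewrite bigA_distr_bigA /=; apply: eq_bigr => s _; rewrite mul1r big_mkcond.
rewrite prodf_seq_neq0; apply/allP => v _ /=.
apply/negP; rewrite addrC addr_eq0 => /eqP xv.
by move: (x_lt1 v); rewrite xv normrN normr1 ltxx.
Qed.

(* Splitting off two distinct variables x_u, x_v: the polynomial is
   bi-affine in them, with coefficients [pair_coef c x u v a b] collecting
   the subsets S with (u \in S, v \in S) = (a, b). *)
Definition others (x : T -> C) (u v : T) (s : {ffun T -> bool}) : C :=
  \prod_(w | (w != u) && (w != v)) (if s w then x w else 1).

Definition pair_coef (c : {ffun T -> bool} -> C) (x : T -> C) (u v : T)
    (a b : bool) : C :=
  \sum_(s : {ffun T -> bool} | (s u == a) && (s v == b)) c s * others x u v s.

Lemma multiaffine_pair (c : {ffun T -> bool} -> C) (x : T -> C) (u v : T) :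
  u != v ->
  multiaffine c x = pair_coef c x u v false false + pair_coef c x u v true false * x u
    + pair_coef c x u v false true * x v + pair_coef c x u v true true * x u * x v.
Proof.
move=> uv.
have split_uv (s : {ffun T -> bool}) : \prod_(w | s w) x w =
    (if s u then x u else 1) * ((if s v then x v else 1) * others x u v s).
  by rewrite big_mkcond /= (bigD1 u) //= (bigD1 v) //= eq_sym uv.
have block a b :
    \sum_(s : {ffun T -> bool} | (s u == a) && (s v == b)) c s * \prod_(w | s w) x w
    = pair_coef c x u v a b * ((if a then x u else 1) * (if b then x v else 1)).
  rewrite /pair_coef mulr_suml; apply: eq_bigr => s /andP [/eqP su /eqP sv].
  by rewrite split_uv su sv; ring.
rewrite /multiaffine (bigID (fun s : {ffun T -> bool} => s u)) /=.
rewrite (bigID (fun s : {ffun T -> bool} => s v)) /=.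
rewrite [X in _ + X](bigID (fun s : {ffun T -> bool} => s v)) /=.
rewrite (eq_bigl (fun s : {ffun T -> bool} => (s u == true) && (s v == true)));
  last by move=> s; rewrite !eqb_id.
rewrite block.
rewrite (eq_bigl (fun s : {ffun T -> bool} => (s u == true) && (s v == false)));
  last by move=> s; rewrite eqb_id eqbF_neg.
rewrite block.
rewrite (eq_bigl (fun s : {ffun T -> bool} => (s u == false) && (s v == true)));
  last by move=> s; rewrite eqb_id eqbF_neg.
rewrite block.
rewrite (eq_bigl (fun s : {ffun T -> bool} => (s u == false) && (s v == false)));
  last by move=> s; rewrite !eqbF_neg.
by rewrite block /=; ring.
Qed.

(* By [multiaffine_pair]
   this is exactly the bi-affine statement [edge_contraction], applied to the
   pair coefficients with the remaining variables frozen. *)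
Lemma polydisk_free_edge (beta : C) : beta \is Num.real -> `|beta| < 1 ->
  forall (c : {ffun T -> bool} -> C) (u v : T), u != v -> polydisk_free c ->
  polydisk_free (fun s => c s * beta ^+ (s u != s v)).
Proof.
move=> beta_real beta_lt1 c u v uv free x x_lt1.
have damped a b : pair_coef (fun s => c s * beta ^+ (s u != s v)) x u v a b =
    beta ^+ (a != b) * pair_coef c x u v a b.
  rewrite /pair_coef mulr_sumr; apply: eq_bigr => s /andP [/eqP -> /eqP ->].
  by rewrite mulrCA mulrA.
rewrite (multiaffine_pair _ x uv) !damped /= expr0 expr1 !mul1r.
apply: edge_contraction => // p q p_lt1 q_lt1.
pose x' w := if w == u then p else if w == v then q else x w.
have x'_lt1 w : `|x' w| < 1 by rewrite /x'; case: ifP => _ //; case: ifP.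
have frozen a b : pair_coef c x' u v a b = pair_coef c x u v a b.
  apply: eq_bigr => s _; congr (_ * _); apply: eq_bigr => w /andP [wu wv].
  by rewrite /x' (negbTE wu) (negbTE wv).
have := free x' x'_lt1.
by rewrite (multiaffine_pair _ x' uv) !frozen /x' eqxx (eq_sym v u) (negbTE uv) eqxx.
Qed.

Definition compl_set (s : {ffun T -> bool}) : {ffun T -> bool} := [ffun v => ~~ s v].

Lemma compl_setK : involutive compl_set.
Proof. by move=> s; apply/ffunP => v; rewrite !ffunE negbK. Qed.

(* For coefficients invariant under complementation the polynomial is
   self-inversive, P(x) = (prod_v x_v) P(1/x); hence the Lee–Yang property
   also excludes zeros with all |x_v| > 1. *)
Lemma polydisk_free_outside (c : {ffun T -> bool} -> C) :
  (forall s, c (compl_set s) = c s) -> polydisk_free c ->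
  forall x : T -> C, (forall v, 1 < `|x v|) -> multiaffine c x != 0.
Proof.
move=> c_sym free x x_gt1.
have x_neq0 v : x v != 0 by rewrite -normr_gt0 (lt_trans ltr01).
have self_inv : multiaffine c x = (\prod_v x v) * multiaffine c (fun v => (x v)^-1).
  rewrite /multiaffine (reindex_inj (can_inj compl_setK)) mulr_sumr.
  apply: eq_bigr => s _; rewrite c_sym mulrCA; congr (_ * _).
  rewrite (bigID (fun v => s v) predT) /= prodfV.
  have prod_neq0 : \prod_(v | s v) x v != 0 by apply/prodf_neq0.
  by rewrite mulrAC divff // mul1r; apply: eq_bigl => v; rewrite ffunE.
rewrite self_inv mulf_neq0 //; first exact/prodf_neq0.
apply: free => v.
by rewrite normfV invf_lt1 // (lt_trans ltr01).
Qed.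
End LeeYang.

Section GraphWeights.
Variables (C : numClosedFieldType) (T : finType) (e : rel T).

Definition is_cut (s : {ffun T -> bool}) (E0 : {set T}) : bool :=
  [exists u in E0, exists v in E0, s u != s v].

Lemma is_cut_pair (s : {ffun T -> bool}) (u v : T) :
  is_cut s [set u; v] = (s u != s v).
Proof.
apply/existsP/idP => [[u'] | suv].
  case/andP=> u'_in /existsP [v' /andP [v'_in suv']]; move: u'_in v'_in suv'.
  by rewrite !in_set2 => /orP [] /eqP -> /orP [] /eqP ->; rewrite ?eqxx // eq_sym.
by exists u; rewrite set21 /=; apply/existsP; exists v; rewrite set22.
Qed.

Lemma is_cut_compl (s : {ffun T -> bool}) (E0 : {set T}) :
  is_cut (compl_set s) E0 = is_cut s E0.
Proof.
apply: eq_existsb => u; congr (_ && _); apply: eq_existsb => v.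
by rewrite !ffunE; case: (s u); case: (s v).
Qed.

Lemma dcut_compl (s : {ffun T -> bool}) : dcut e (compl_set s) = dcut e s.
Proof.
by apply: eq_card => E0; rewrite !inE -!/(is_cut _ E0) is_cut_compl.
Qed.

Lemma dcut_prod (beta : C) (s : {ffun T -> bool}) :
  beta ^+ dcut e s = \prod_(E0 in edges e) beta ^+ is_cut s E0.
Proof.
rewrite prodrXr; congr (_ ^+ _).
rewrite /dcut -sum1_card big_mkcond /= [RHS]big_mkcond /=; apply: eq_bigr => E0 _.
by rewrite inE /is_cut; case: (E0 \in edges e); case: [exists _ in _, _].
Qed.

Lemma polydisk_free_cut_weights (beta : C) : beta \is Num.real -> `|beta| < 1 ->
  forall r : seq {set T},
  (forall E0, E0 \in r -> exists u v, u != v /\ E0 = [set u; v]) ->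
  polydisk_free (fun s : {ffun T -> bool} => \prod_(E0 <- r) beta ^+ is_cut s E0).
Proof.
move=> beta_real beta_lt1; elim=> [|E0 r IH] r_pairs.
  by apply: polydisk_free_eq (@polydisk_free_one C T) => s; rewrite big_nil.
have [u [v [uv ->]]] := r_pairs E0 (mem_head _ _).
have free_r : polydisk_free (fun s => \prod_(E1 <- r) beta ^+ is_cut s E1).
  by apply: IH => E1 E1r; apply: r_pairs; rewrite in_cons E1r orbT.
apply: polydisk_free_eq (polydisk_free_edge beta_real beta_lt1 uv free_r) => s.
by rewrite big_cons is_cut_pair mulrC.
Qed.

Lemma polydisk_free_dcut (beta : C) : irreflexive e ->
  beta \is Num.real -> `|beta| < 1 ->
  polydisk_free (fun s : {ffun T -> bool} => beta ^+ dcut e s).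
Proof.
move=> loopless beta_real beta_lt1.
apply: polydisk_free_eq (polydisk_free_cut_weights beta_real beta_lt1 (r := enum (edges e)) _).
  by move=> s; rewrite big_enum /= dcut_prod.
move=> E0; rewrite mem_enum => /imsetP [[u v]]; rewrite inE /= => euv ->.
by exists u, v; split=> //; apply: contraTneq euv => ->; rewrite loopless.
Qed.
End GraphWeights.

Section RayPolynomial.
Variables (C : numClosedFieldType) (T : finType).
Variables (c : {ffun T -> bool} -> C) (w : T -> nat) (z : T -> C).

Definition weight (s : {ffun T -> bool}) : nat := \sum_(v | s v) w v.
Definition monomial (s : {ffun T -> bool}) : C := \prod_(v | s v) z v ^+ w v.

(* The Euler operator D_G becomes t d/dt, so at t = 1 it gives p'(1). *)
Definition ray_poly : {poly C} :=
  \sum_(s : {ffun T -> bool}) (c s * monomial s) *: 'X^(weight s).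

Lemma horner_ray_poly (t : C) :
  ray_poly.[t] = multiaffine c (fun v => (t * z v) ^+ w v).
Proof.
rewrite /ray_poly horner_sum; apply: eq_bigr => s _.
rewrite hornerZ hornerXn /monomial -mulrA; congr (_ * _).
under [RHS]eq_bigr do rewrite exprMn.
by rewrite big_split /= prodrXr mulrC.
Qed.

Lemma deriv_ray_poly1 :
  ray_poly^`().[1] = \sum_(s : {ffun T -> bool}) c s * ((weight s)%:R * monomial s).
Proof.
rewrite /ray_poly raddf_sum horner_sum; apply: eq_bigr => s _.
rewrite /= derivZ derivXn hornerZ hornerMn hornerXn expr1n.
by rewrite -mulrA [_ * (weight s)%:R]mulrC.
Qed.

(* With positive weights, nonzero activities and a nonzero coefficient for
   the full set T, the top monomial t^{sum_v w v} survives, so deg p >= |T|. *)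
Lemma size_ray_poly : (forall v, 0 < w v)%N -> c [ffun=> true] != 0 ->
  (forall v, z v != 0) -> (#|T| < size ray_poly)%N.
Proof.
move=> w_gt0 c_full z_neq0; set full : {ffun T -> bool} := [ffun=> true].
pose top := (\sum_v w v)%N.
have weight_full : weight full = top by apply: eq_bigl => v; rewrite ffunE.
have weight_lt s : s != full -> (weight s < top)%N.
  move=> s_neq; have [v sv | s_full] := pickP (fun v => ~~ s v); last first.
    by case/eqP: s_neq; apply/ffunP => v; rewrite ffunE; apply/negbFE/s_full.
  rewrite /weight /top (bigID (fun v => s v) predT) /= -[X in (X < _)%N]addn0 ltn_add2l.
  by rewrite (bigD1 v) //= (leq_trans (w_gt0 v) (leq_addr _ _)).
have top_coef : ray_poly`_top = c full * monomial full.
  rewrite /ray_poly coef_sum (bigD1 full) //= big1 ?addr0.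
    by rewrite coefZ coefXn weight_full eqxx mulr1.
  move=> s s_neq; rewrite coefZ coefXn.
  by rewrite eq_sym ltn_eqF ?weight_lt // mulr0.
have top_coef_neq0 : ray_poly`_top != 0.
  rewrite top_coef mulf_neq0 //; apply/prodf_neq0 => v _; exact: expf_neq0.
have card_le : (#|T| <= top)%N by rewrite -sum1_card; apply: leq_sum => v _.
apply: leq_ltn_trans card_le _; rewrite ltnNge; apply: contra top_coef_neq0.
by move/leq_sizeP => /(_ top (leqnn _)) ->.
Qed.
End RayPolynomial.

Theorem theorem4 (C : numClosedFieldType) (T : finType) (e : rel T)
    (w : T -> nat) (beta : C) (z : T -> C) :
  simple_graph e ->
  legal e w ->
  beta \is Num.real -> 0 < beta -> beta < 1 ->
  (forall v, 1 <= `|z v|) ->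
  Zw e w beta z != 0 ->
  (#|T|%:R / 2 : C) <= 'Re (DZw e w beta z / Zw e w beta z).
Proof.
move=> [_ loopless] legal_w beta_real beta_gt0 beta_lt1 z_ge1 Z_neq0.
pose c (s : {ffun T -> bool}) := beta ^+ dcut e s.
pose p := ray_poly c w z.
have w_gt0 v : (0 < w v)%N by case: (legal_w v).
have z_neq0 v : z v != 0 by rewrite -normr_gt0 (lt_le_trans ltr01).
have p1 : p.[1] = Zw e w beta z.
  by rewrite horner_ray_poly; apply: eq_bigr => s _; under eq_bigr do rewrite mul1r.
have p'1 : p^`().[1] = DZw e w beta z by rewrite deriv_ray_poly1.
have p_out t : 1 < `|t| -> p.[t] != 0.
  move=> t_gt1; rewrite horner_ray_poly.
  apply: polydisk_free_outside => [s | | v]; first by rewrite /c dcut_compl.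
    by apply: polydisk_free_dcut; rewrite ?gtr0_norm.
  rewrite normrX exprn_egt1 -?lt0n // normrM (lt_le_trans t_gt1) //.
  by rewrite ler_peMr ?normr_ge0.
have deg_p : (#|T| <= (size p).-1)%N.
  have p_big : (#|T| < size p)%N by apply: size_ray_poly; rewrite // expf_neq0 ?gt_eqF.
  by rewrite -ltnS prednK // (leq_ltn_trans _ p_big).
rewrite -p1 -p'1; apply: le_trans (Re_logderiv_ge _ _); last exact: p_out.
  by rewrite ler_wpM2r ?invr_ge0 ?ler0n // ler_nat.
by rewrite p1.
Qed.
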